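(* Let $\mathfrak{g}$ be a nilpotent Lie algebra over an infinite field $\mathbb{F}$, and let $n$ be a non-negative integer such that $\dim[\mathfrak{g},\mathfrak{g}] > n(n-1)/2$. Then the set $\{x\in\mathfrak{g} : b(x)\ge n\}$ of elements of breadth at least $n$ cannot be covered by (i.e. is not contained in the union of) finitely many proper Lie subalgebras of $\mathfrak{g}$.
   Context: For an element $x$ of a Lie algebra $\mathfrak{g}$ over a field, the centralizer is $C_{\mathfrak{g}}(x)=\{y\in\mathfrak{g} : [x,y]=0\}$, and the breadth of $x$ is $b(x)=\dim\mathfrak{g}-\dim C_{\mathfrak{g}}(x)$, i.e. the codimension of $C_{\mathfrak{g}}(x)$ in $\mathfrak{g}$ (this is a non-negative integer or $\infty$ if $\mathfrak{g}$ is infinite-dimensional). $\mathfrak{g}'=[\mathfrak{g},\mathfrak{g}]$ denotes the derived subalgebra. *)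

From HB Require Import structures.
From mathcomp Require Import all_boot all_order all_algebra.
Set Implicit Arguments. Unset Strict Implicit. Unset Printing Implicit Defensive.
Import Order.TTheory GRing.Theory Num.Theory.
Local Open Scope ring_scope.

Definition infinite_field (F : fieldType) : Prop :=
  forall s : seq F, exists x : F, x \notin s.

Record is_lie_bracket (F : fieldType) (L : lmodType F) (br : L -> L -> L) : Prop := {
  lie_linl : forall (a : F) (x y z : L), br (a *: x + y) z = a *: br x z + br y z;
  lie_linr : forall (a : F) (x y z : L), br x (a *: y + z) = a *: br x y + br x z;
  lie_alt  : forall x : L, br x x = 0;
  lie_jacobi : forall x y z : L, br x (br y z) + br y (br z x) + br z (br x y) = 0 }.

(* Membership in the lower central series g^1 = g, g^(k+2) = [g, g^(k+1)]
   (indexed from 0: lcs 0 = g). An element of [g, V] is a finite sum of brackets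
   [a, b] with b in V. *)
Fixpoint lcs (F : fieldType) (L : lmodType F) (br : L -> L -> L) (k : nat) (v : L) : Prop :=
  match k with
  | 0 => True
  | k'.+1 => exists s : seq (L * L),
      (forall p, p \in s -> lcs br k' p.2) /\ v = \sum_(p <- s) br p.1 p.2
  end.

Definition nilpotent_lie (F : fieldType) (L : lmodType F) (br : L -> L -> L) : Prop :=
  exists c : nat, forall v : L, lcs br c v -> v = 0.

Definition in_derived (F : fieldType) (L : lmodType F) (br : L -> L -> L) (v : L) : Prop :=
  exists s : seq (L * L), v = \sum_(p <- s) br p.1 p.2.

Definition lin_indep (F : fieldType) (L : lmodType F) (m : nat) (v : 'I_m -> L) : Prop :=
  forall c : 'I_m -> F, \sum_(i < m) c i *: v i = 0 -> forall i, c i = 0.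

(* dim g' > d  (dim may be infinite): g' contains more than d independent vectors. *)
Definition dim_derived_gt (F : fieldType) (L : lmodType F) (br : L -> L -> L) (d : nat) : Prop :=
  exists m : nat, (d < m)%N /\
    exists v : 'I_m -> L, (forall i, in_derived br (v i)) /\ lin_indep v.

(* C_g(x) = {y | [x,y] = 0};  b(x) >= n  iff  codim C_g(x) >= n, i.e. there are
   n vectors linearly independent modulo C_g(x). *)
Definition centralizer (F : fieldType) (L : lmodType F) (br : L -> L -> L) (x : L) : L -> Prop :=
  fun y => br x y = 0.

Definition breadth_ge (F : fieldType) (L : lmodType F) (br : L -> L -> L) (x : L) (n : nat) : Prop :=
  exists y : 'I_n -> L, forall c : 'I_n -> F,
    centralizer br x (\sum_(i < n) c i *: y i) -> forall i, c i = 0.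

Definition lie_subalgebra (F : fieldType) (L : lmodType F) (br : L -> L -> L) (S : L -> Prop) : Prop :=
  [/\ S 0,
      (forall x y, S x -> S y -> S (x + y)),
      (forall (a : F) x, S x -> S (a *: x)) &
      (forall x y, S x -> S y -> S (br x y))].

Definition proper_subset_pred (L : Type) (S : L -> Prop) : Prop := exists x : L, ~ S x.

(* Suppose no element has breadth at least n, and let x have maximal breadth m < n,
   witnessed by u_1, ..., u_m with [x, u_i] independent.  Maximality gives
   [x, g] <= span [x, u_i].  It also gives [y, c] in span [x, u_i] whenever
   [x, c] = 0: otherwise x + t y would have breadth m + 1 for all but finitely
   many t, because a pencil a_i + t b_i of vectors with the a_i independent is
   independent off finitely many t.  Writing p = c + sum r_i u_i with [x, c] = 0,
   g' is therefore spanned by the [x, u_i] and the [u_i, u_j] with j < i, so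
   dim g' <= m (m + 1) / 2 <= n (n - 1) / 2.  Hence some x0 has breadth >= n.
   Given proper subalgebras S_1, ..., S_k, pick p outside all of them (again a
   line argument); each S_i meets the line through x0 and p in at most one
   point, while all but finitely many points of that line have breadth >= n. *)

From HB Require Import structures.
From mathcomp Require Import all_boot all_order all_algebra.
From Stdlib Require Import Classical ClassicalEpsilon.
Set Implicit Arguments. Unset Strict Implicit. Unset Printing Implicit Defensive.
Import GRing.Theory.
Local Open Scope ring_scope.

Lemma lift_ord_max m (j : 'I_m) : lift ord_max j = widen_ord (leqnSn m) j.
Proof. by apply: ord_inj; rewrite lift_max. Qed.

Definition extend (T : Type) m (w : 'I_m -> T) (v : T) (i : 'I_m.+1) : T :=
  if unlift ord_max i is Some j then w j else v.

Lemma extend_widen (T : Type) m (w : 'I_m -> T) v j :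
  extend w v (widen_ord (leqnSn m) j) = w j.
Proof. by rewrite -lift_ord_max /extend liftK. Qed.

Lemma extend_max (T : Type) m (w : 'I_m -> T) v : extend w v ord_max = v.
Proof. by rewrite /extend unlift_none. Qed.

Lemma extend_map (T U : Type) (f : T -> U) m (w : 'I_m -> T) v i :
  f (extend w v i) = extend (f \o w) (f v) i.
Proof. by rewrite /extend; case: (unlift ord_max i). Qed.

Lemma bounded_uniq_cover (T : eqType) (P : T -> Prop) N :
  (forall s, uniq s -> {in s, forall t, P t} -> (size s <= N)%N) ->
  exists s : seq T, forall t, P t -> t \in s.
Proof.
move=> bounded; apply: NNPP => no_cover.
have grow k : exists s, [/\ uniq s, {in s, forall t, P t} & size s = k].
  elim: k => [|k [s [s_uniq sP <-]]]; first by exists [::].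
  have [t Pt ts] : exists2 t, P t & t \notin s.
    apply: NNPP => none; apply: no_cover; exists s => t Pt.
    by apply: NNPP => ts; apply: none; exists t => //; apply/negP.
  exists (t :: s); split => //=; first by rewrite ts.
  by move=> x; rewrite inE => /predU1P [->|/sP].
have [s [s_uniq sP s_size]] := grow N.+1.
by have := bounded s s_uniq sP; rewrite s_size ltnn.
Qed.

Lemma exists_last_before_fail (P : nat -> Prop) n :
  P 0 -> ~ P n -> exists2 m, (m < n)%N & P m /\ ~ P m.+1.
Proof.
elim: n => [|n IH] P0 Pn //; case: (classic (P n)) => [Pn'|/(IH P0) [m mn Pm]].
  by exists n.
by exists m => //; apply: ltnW.
Qed.

Lemma finite_union_singletons (T : eqType) k (P : 'I_k -> T -> Prop) :
  (forall i t1 t2, P i t1 -> P i t2 -> t1 = t2) ->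
  exists l : seq T, forall i t, P i t -> t \in l.
Proof.
move=> P_uniq; have /choice [l hl] : forall i, exists l : seq T, forall t, P i t -> t \in l.
  move=> i; case: (classic (exists t, P i t)) => [[t Pt]|none].
    by exists [:: t] => t' /(P_uniq _ _ _ Pt) ->; rewrite mem_seq1.
  by exists [::] => t Pt; case: none; exists t.
exists (flatten [seq l i | i <- enum 'I_k]) => i t Pt; apply/flattenP.
by exists (l i); [rewrite map_f ?mem_enum | apply: hl].
Qed.

Section LinearAlgebra.
Variables (F : fieldType) (L : lmodType F).

Definition lincomb (K : nat) (g : 'I_K -> L) (r : 'rV[F]_K) : L :=
  \sum_(k < K) r 0 k *: g k.

Lemma lincomb0 K (g : 'I_K -> L) : lincomb g 0 = 0.
Proof. by rewrite /lincomb big1 // => k _; rewrite mxE scale0r. Qed.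

Lemma lincombD K (g : 'I_K -> L) r s : lincomb g (r + s) = lincomb g r + lincomb g s.
Proof. by rewrite /lincomb -big_split; apply: eq_bigr => k _; rewrite mxE scalerDl. Qed.

Lemma lincombZ K (g : 'I_K -> L) a r : lincomb g (a *: r) = a *: lincomb g r.
Proof. by rewrite /lincomb scaler_sumr; apply: eq_bigr => k _; rewrite mxE scalerA. Qed.

Lemma lincomb_sum K (g : 'I_K -> L) (I : Type) (s : seq I) (P : pred I) f :
  lincomb g (\sum_(i <- s | P i) f i) = \sum_(i <- s | P i) lincomb g (f i).
Proof. exact: (big_morph _ (lincombD g) (lincomb0 g)). Qed.

Lemma lincomb_delta K (g : 'I_K -> L) k : lincomb g (delta_mx 0 k) = g k.
Proof.
rewrite /lincomb (bigD1 k) //= mxE !eqxx scale1r big1 ?addr0 // => j /negbTE jk.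
by rewrite mxE jk andbF scale0r.
Qed.

Lemma lincomb_eq0 K (g : 'I_K -> L) r : lin_indep g -> lincomb g r = 0 -> r = 0.
Proof.
move=> hg h; apply/rowP => k; rewrite mxE.
exact: (hg (fun k => r 0 k)).
Qed.

Lemma eq_lin_indep M (f g : 'I_M -> L) : f =1 g -> lin_indep f -> lin_indep g.
Proof. by move=> e hf c hc; apply: hf; rewrite -[RHS]hc; apply: eq_bigr => i _; rewrite e. Qed.

Definition in_span K (g : 'I_K -> L) (v : L) := exists r, v = lincomb g r.

Lemma in_span0 K (g : 'I_K -> L) : in_span g 0.
Proof. by exists 0; rewrite lincomb0. Qed.

Lemma in_spanD K (g : 'I_K -> L) u v : in_span g u -> in_span g v -> in_span g (u + v).
Proof. by move=> [r ->] [s ->]; exists (r + s); rewrite lincombD. Qed.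

Lemma in_spanZ K (g : 'I_K -> L) a v : in_span g v -> in_span g (a *: v).
Proof. by move=> [r ->]; exists (a *: r); rewrite lincombZ. Qed.

Lemma in_spanN K (g : 'I_K -> L) v : in_span g v -> in_span g (- v).
Proof. by move=> h; rewrite -scaleN1r; apply: in_spanZ. Qed.

Lemma in_span_gen K (g : 'I_K -> L) k : in_span g (g k).
Proof. by exists (delta_mx 0 k); rewrite lincomb_delta. Qed.

Lemma in_span_sum K (g : 'I_K -> L) (I : Type) (s : seq I) (P : pred I) (f : I -> L) :
  (forall i, P i -> in_span g (f i)) -> in_span g (\sum_(i <- s | P i) f i).
Proof.
move=> h; elim/big_rec: _ => [|i v Pi]; first exact: in_span0.
by apply: in_spanD; apply: h.
Qed.

Lemma in_span_trans K (g : 'I_K -> L) K' (g' : 'I_K' -> L) v :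
  (forall k, in_span g' (g k)) -> in_span g v -> in_span g' v.
Proof. by move=> h [r ->]; apply: in_span_sum => k _; apply: in_spanZ. Qed.

Lemma in_span_mem (s : seq L) v : v \in s -> in_span (fun k : 'I_(size s) => s`_k) v.
Proof.
move=> sv; have := in_span_gen (fun k : 'I_(size s) => s`_k) (Ordinal (etrans (index_mem v s) sv)).
by rewrite /= nth_index.
Qed.

Lemma lin_indep_rows_le M K (c : 'I_M -> 'rV[F]_K) : lin_indep c -> (M <= K)%N.
Proof.
move=> hc; have free_c : row_free (\matrix_j c j).
  apply: inj_row_free => v; rewrite mulmx_sum_row => hv.
  apply/rowP => j; rewrite mxE; apply: hc.
  by rewrite -[RHS]hv; apply: eq_bigr => k _; rewrite rowK.
by rewrite -(eqP free_c) rank_leq_col.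
Qed.

Lemma lin_indep_span_le M K (w : 'I_M -> L) (g : 'I_K -> L) :
  lin_indep w -> (forall j, in_span g (w j)) -> (M <= K)%N.
Proof.
move=> hw /choice [r hr]; apply: (@lin_indep_rows_le M K r) => c hc; apply: hw.
rewrite (eq_bigr (fun j => lincomb g (c j *: r j))) => [|j _]; last by rewrite hr lincombZ.
by rewrite -lincomb_sum hc lincomb0.
Qed.

Lemma lin_indep_extend m (w : 'I_m -> L) v :
  lin_indep w -> ~ in_span w v -> lin_indep (extend w v).
Proof.
move=> hw hv c; rewrite big_ord_recr /= extend_max.
under eq_bigr => j _ do rewrite extend_widen.
move=> hc; have c_max : c ord_max = 0.
  apply: NNPP => /eqP cmax; apply: hv.
  exists (\row_j (- (c ord_max)^-1 * c (widen_ord (leqnSn m) j))).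
  apply: (scalerI cmax).
  have -> : c ord_max *: v = - \sum_(j < m) c (widen_ord (leqnSn m) j) *: w j.
    by apply/eqP; rewrite -addr_eq0 addrC hc.
  rewrite /lincomb scaler_sumr -sumrN; apply: eq_bigr => j _.
  by rewrite mxE !scalerA mulrA mulrN mulfV // mulN1r scaleNr.
move: hc; rewrite c_max scale0r addr0 => /hw c0 i.
by case: (unliftP ord_max i) => [j ->|->] //; rewrite lift_ord_max c0.
Qed.

End LinearAlgebra.

Section Pencil.
Variables (F : fieldType) (L : lmodType F) (N : nat) (a b : 'I_N -> L).
Hypothesis a_indep : lin_indep a.

(* Nonzero kernel vectors of [lincomb a + t lincomb b] for distinct t are independent,
   just as eigenvectors for distinct eigenvalues are. *)
Lemma pencil_kernel_indep M (t : 'I_M -> F) (r : 'I_M -> 'rV[F]_N) :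
  injective t -> (forall j, r j != 0) ->
  (forall j, lincomb a (r j) + t j *: lincomb b (r j) = 0) -> lin_indep r.
Proof.
elim: M t r => [|M IH] t r t_inj r_nz ker; first by move=> c _ [].
have t_nz j : t j != 0.
  apply: contra_neq (r_nz j) => tj0; apply: (lincomb_eq0 a_indep).
  by have := ker j; rewrite tj0 scale0r addr0.
have a_r j : lincomb a (r j) = - (t j *: lincomb b (r j)).
  by apply/eqP; rewrite -addr_eq0 ker.
move=> lam sum0.
have sum_div : \sum_(j < M.+1) (lam j / t j) *: r j = 0.
  apply: (lincomb_eq0 a_indep); rewrite lincomb_sum.
  transitivity (- lincomb b (\sum_(j < M.+1) lam j *: r j)).
    rewrite lincomb_sum -sumrN; apply: eq_bigr => j _.
    by rewrite !lincombZ a_r scalerN scalerA divfK.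
  by rewrite sum0 lincomb0 oppr0.
pose t0 := t ord_max.
have : \sum_(j < M.+1) (lam j * ((t j)^-1 - t0^-1)) *: r j = 0.
  under eq_bigr => j _ do rewrite mulrBr scalerBl.
  rewrite sumrB sum_div (eq_bigr (fun j => t0^-1 *: (lam j *: r j))) => [|j _].
    by rewrite -scaler_sumr sum0 scaler0 subrr.
  by rewrite scalerA mulrC.
rewrite big_ord_recr /= subrr mulr0 scale0r addr0.
have t_inj' : injective (fun j => t (widen_ord (leqnSn M) j)).
  by move=> j k /t_inj /(congr1 (@nat_of_ord _)) /= jk; apply: ord_inj.
move=> /(IH _ _ t_inj' (fun j => r_nz _) (fun j => ker _)) lam_t.
have lam_lt j : lam (widen_ord (leqnSn M) j) = 0.
  apply/eqP; move/eqP: (lam_t j); rewrite mulf_eq0 subr_eq0 => /orP [//|/eqP].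
  move=> /invr_inj /t_inj /(congr1 (@nat_of_ord _)) /= jM.
  by have := ltn_ord j; rewrite jM ltnn.
have lam_max : lam ord_max = 0.
  move: sum0; rewrite big_ord_recr /= big1 ?add0r => [|j _]; last by rewrite lam_lt scale0r.
  by move/eqP; rewrite scaler_eq0 (negbTE (r_nz _)) orbF => /eqP.
by move=> i; case: (unliftP ord_max i) => [j ->|->] //; rewrite lift_ord_max.
Qed.

Lemma pencil_singular_kernel t :
  ~ lin_indep (fun i => a i + t *: b i) ->
  exists2 r : 'rV[F]_N, r != 0 & lincomb a r + t *: lincomb b r = 0.
Proof.
move=> dep; apply: NNPP => no_r; apply: dep => c hc i; apply: NNPP => ci; apply: no_r.
exists (\row_k c k); first by apply/eqP => /rowP /(_ i); rewrite !mxE.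
rewrite /lincomb -[RHS]hc scaler_sumr -big_split; apply: eq_bigr => k _.
by rewrite !mxE scalerDr !scalerA mulrC.
Qed.

Lemma pencil_singular_size_le (s : seq F) : uniq s ->
  {in s, forall t, ~ lin_indep (fun i => a i + t *: b i)} -> (size s <= N)%N.
Proof.
move=> s_uniq s_sing.
have /choice [r hr] : forall j : 'I_(size s), exists r : 'rV[F]_N,
    r != 0 /\ lincomb a r + s`_j *: lincomb b r = 0.
  by move=> j; have [r] := pencil_singular_kernel (s_sing _ (mem_nth 0 (ltn_ord j))); exists r.
apply: (@lin_indep_rows_le _ _ _ r); apply: (@pencil_kernel_indep _ (fun j => s`_j)).
- by move=> j k /eqP; rewrite nth_uniq // => /eqP /val_inj.
- by move=> j; case: (hr j).
- by move=> j; case: (hr j).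
Qed.

Lemma lin_indep_pencil_cofinite :
  exists s : seq F, forall t, t \notin s -> lin_indep (fun i => a i + t *: b i).
Proof.
have [s hs] := bounded_uniq_cover pencil_singular_size_le.
by exists s => t ts; apply: NNPP => /hs; apply/negP.
Qed.

End Pencil.

Section LieBracket.
Variables (F : fieldType) (L : lmodType F) (br : L -> L -> L).
Hypothesis hL : is_lie_bracket br.

Lemma lie0r x : br x 0 = 0.
Proof.
have := lie_linr hL 1 x 0 0; rewrite !scale1r addr0 => h.
by apply: (addrI (br x 0)); rewrite addr0 -h.
Qed.

Lemma lie0l x : br 0 x = 0.
Proof.
have := lie_linl hL 1 0 0 x; rewrite !scale1r addr0 => h.
by apply: (addrI (br 0 x)); rewrite addr0 -h.
Qed.

Lemma lieDr x y z : br x (y + z) = br x y + br x z.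
Proof. by have := lie_linr hL 1 x y z; rewrite !scale1r. Qed.

Lemma lieDl x y z : br (x + y) z = br x z + br y z.
Proof. by have := lie_linl hL 1 x y z; rewrite !scale1r. Qed.

Lemma lieZr a x y : br x (a *: y) = a *: br x y.
Proof. by have := lie_linr hL a x y 0; rewrite !addr0 lie0r addr0. Qed.

Lemma lieZl a x y : br (a *: x) y = a *: br x y.
Proof. by have := lie_linl hL a x 0 y; rewrite !addr0 lie0l addr0. Qed.

Lemma lieNr x y : br x (- y) = - br x y.
Proof. by rewrite -scaleN1r lieZr scaleN1r. Qed.

Lemma lieBr x y z : br x (y - z) = br x y - br x z.
Proof. by rewrite lieDr lieNr. Qed.

Lemma lie_anti x y : br x y = - br y x.
Proof.
have := lie_alt hL (x + y); rewrite lieDl !lieDr !lie_alt // add0r addr0.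
by move/eqP; rewrite addr_eq0 => /eqP.
Qed.

Lemma lie_sumZr x K (c : 'I_K -> F) (y : 'I_K -> L) :
  br x (\sum_(k < K) c k *: y k) = \sum_(k < K) c k *: br x (y k).
Proof.
rewrite (big_morph (br x) (lieDr x) (lie0r x)).
by apply: eq_bigr => k _; rewrite lieZr.
Qed.

Lemma lie_lincombr x K (g : 'I_K -> L) r :
  br x (lincomb g r) = lincomb (fun k => br x (g k)) r.
Proof. exact: lie_sumZr. Qed.

Lemma lie_lincombl x K (g : 'I_K -> L) r :
  br (lincomb g r) x = lincomb (fun k => br (g k) x) r.
Proof.
rewrite /lincomb (big_morph (br^~ x) (fun y z => lieDl y z x) (lie0l x)).
by apply: eq_bigr => k _; rewrite lieZl.
Qed.

Definition indep_brackets x k := exists y : 'I_k -> L, lin_indep (fun i => br x (y i)).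

Lemma indep_brackets_breadth_ge x k : indep_brackets x k -> breadth_ge br x k.
Proof.
by move=> [y hy]; exists y => c; rewrite /centralizer lie_sumZr; apply: hy.
Qed.

End LieBracket.

Section MaximalBreadth.
Variables (F : fieldType) (L : lmodType F) (br : L -> L -> L).
Hypotheses (hL : is_lie_bracket br) (hF : infinite_field F).
Variables (m : nat) (x : L) (u : 'I_m -> L).
Hypothesis u_indep : lin_indep (fun i => br x (u i)).
Hypothesis no_wider : ~ exists y, indep_brackets br y m.+1.

Lemma bracket_in_span p : in_span (fun i => br x (u i)) (br x p).
Proof.
apply: NNPP => notin; apply: no_wider; exists x, (extend u p).
by apply: eq_lin_indep (lin_indep_extend u_indep notin) => i; rewrite (extend_map (br x)).
Qed.

Lemma centralizer_bracket_in_span y c :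
  br x c = 0 -> in_span (fun i => br x (u i)) (br y c).
Proof.
move=> xc0; apply: NNPP => notin.
have [s hs] := lin_indep_pencil_cofinite (extend (fun j => br y (u j)) 0)
  (lin_indep_extend u_indep notin).
have [t] := hF (0 :: s); rewrite inE negb_or => /andP [t_nz ts].
apply: no_wider; exists (x + t *: y), (extend u (t^-1 *: c)).
(* [x + t y, c / t] = [y, c] since [x, c] = 0. *)
apply: eq_lin_indep (hs t ts) => i; rewrite /extend; case: (unlift ord_max i) => [j|] /=.
  by rewrite lieDl // lieZl.
by rewrite scaler0 addr0 lieZr // lieDl // lieZl // xc0 add0r scalerA mulVf ?scale1r.
Qed.

(* [u] reindexed by [nat], so that the pairs j < i < m can be listed with [iota]. *)
Let u_at k := [seq u i | i <- enum 'I_m]`_k.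

Lemma u_atE (i : 'I_m) : u_at i = u i.
Proof. by rewrite /u_at (nth_map i) ?size_enum_ord ?ltn_ord // nth_ord_enum. Qed.

Definition bracket_basis : seq L :=
  [seq br x (u i) | i <- enum 'I_m] ++
  flatten [seq [seq br (u_at i) (u_at j) | j <- iota 0 i] | i <- iota 0 m].

Lemma size_bracket_basis : size bracket_basis = 'C(m.+1, 2).
Proof.
rewrite size_cat size_map size_enum_ord size_flatten /shape -map_comp.
rewrite (@eq_map _ _ _ id) => [|i /=]; last by rewrite size_map size_iota.
have -> : iota 0 m = index_iota 0 m by rewrite /index_iota subn0.
by rewrite map_id sumnE -!bin2_sum big_nat_recr //= addnC.
Qed.

Let span_basis := in_span (fun k : 'I_(size bracket_basis) => bracket_basis`_k).

Lemma lie_u_in_span_basis i j : span_basis (br (u i) (u j)).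
Proof.
have ordered (i' j' : 'I_m) : (j' < i')%N -> span_basis (br (u i') (u j')).
  move=> ji; apply: in_span_mem; rewrite mem_cat; apply/orP; right.
  apply/flattenP; exists [seq br (u_at i') (u_at j) | j <- iota 0 i'].
    by apply: map_f; rewrite mem_iota /= ltn_ord.
  by rewrite -!u_atE; apply: map_f; rewrite mem_iota.
case: (ltngtP i j) => [ij|ji|/ord_inj ->]; last by rewrite lie_alt //; apply: in_span0.
  by rewrite lie_anti //; apply/in_spanN/ordered.
exact: ordered.
Qed.

Lemma bracket_in_span_basis p q : span_basis (br p q).
Proof.
have ad_u_in k : span_basis (br x (u k)).
  by apply: in_span_mem; rewrite mem_cat map_f ?mem_enum.
have centr_in y c : br x c = 0 -> span_basis (br y c).
  by move=> xc0; apply: in_span_trans ad_u_in _; apply: centralizer_bracket_in_span.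
(* Modulo span(u), both p and q centralize x. *)
have [rp ep] := bracket_in_span p; have [rq eq] := bracket_in_span q.
set cp := p - lincomb u rp; set cq := q - lincomb u rq.
have xcp : br x cp = 0 by rewrite lieBr // lie_lincombr // ep subrr.
have xcq : br x cq = 0 by rewrite lieBr // lie_lincombr // eq subrr.
rewrite -(subrK (lincomb u rq) q) -/cq lieDr //; apply: in_spanD; first exact: centr_in.
rewrite lie_lincombr //; apply: in_span_sum => j _; apply: in_spanZ.
rewrite -(subrK (lincomb u rp) p) -/cp lieDl //; apply: in_spanD.
  by rewrite lie_anti //; apply/in_spanN/centr_in.
rewrite lie_lincombl //; apply: in_span_sum => i _; apply: in_spanZ.
exact: lie_u_in_span_basis.
Qed.

Lemma lin_indep_derived_le M (v : 'I_M -> L) :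
  (forall i, in_derived br (v i)) -> lin_indep v -> (M <= 'C(m.+1, 2))%N.
Proof.
move=> v_der v_indep; rewrite -size_bracket_basis.
apply: (lin_indep_span_le v_indep) => i; have [s ->] := v_der i.
by apply: in_span_sum => pq _; apply: bracket_in_span_basis.
Qed.

End MaximalBreadth.

Lemma exists_indep_brackets (F : fieldType) (L : lmodType F) (br : L -> L -> L) n :
  is_lie_bracket br -> infinite_field F ->
  dim_derived_gt br ((n * (n - 1)) %/ 2)%N -> exists x, indep_brackets br x n.
Proof.
move=> hL hF [M [M_gt [v [v_der v_indep]]]]; apply: NNPP => none.
have [|m mn [[x [u u_indep]] no_wider]] :=
  @exists_last_before_fail (fun k => exists x, indep_brackets br x k) n _ none.
  by exists 0, (fun _ => 0) => c _ [].
have := lin_indep_derived_le hL hF u_indep no_wider v_der v_indep.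
apply/negP; rewrite -ltnNge; apply: leq_ltn_trans M_gt.
by rewrite subn1 divn2 -bin2; apply: leq_bin2l.
Qed.

Section SubalgebraCover.
Variables (F : fieldType) (L : lmodType F) (br : L -> L -> L).

Lemma lie_subalgebra_line (S : L -> Prop) a d t1 t2 t : lie_subalgebra br S ->
  S (a + t1 *: d) -> S (a + t2 *: d) -> t1 != t2 -> S (a + t *: d).
Proof.
case=> _ SD SZ _ S1 S2 t12.
have SN w : S w -> S (- w) by move=> Sw; rewrite -scaleN1r; apply: SZ.
have Sd : S d.
  have -> : d = (t1 - t2)^-1 *: ((a + t1 *: d) + - (a + t2 *: d)).
    rewrite opprD addrACA subrr add0r -scalerBl scalerA mulVf ?scale1r //.
    by rewrite subr_eq0.
  by apply/SZ/SD => //; apply: SN.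
have Sa : S a by rewrite -(addrK (t1 *: d) a); apply/SD/SN/SZ.
by apply/SD/SZ.
Qed.

Lemma line_avoids_subalgebras k (S : 'I_k -> L -> Prop) a d :
  (forall i, lie_subalgebra br (S i)) -> (forall i, exists t0, ~ S i (a + t0 *: d)) ->
  exists l : seq F, forall t, t \notin l -> forall i, ~ S i (a + t *: d).
Proof.
move=> S_sub S_miss.
have [l hl] : exists l : seq F, forall i t, S i (a + t *: d) -> t \in l.
  apply: finite_union_singletons => i t1 t2 S1 S2; apply: NNPP => /eqP t12.
  by have [t0] := S_miss i; apply; apply: (lie_subalgebra_line t0 (S_sub i) S1 S2).
by exists l => t tl i /hl; apply/negP.
Qed.

Lemma exists_notin_subalgebras (hF : infinite_field F) k (S : 'I_k -> L -> Prop) :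
  (forall i, lie_subalgebra br (S i) /\ proper_subset_pred (S i)) ->
  exists p, forall i, ~ S i p.
Proof.
elim: k S => [|k IH] S hS; first by exists 0 => [[]].
have [p p_out] := IH (fun i => S (lift ord_max i)) (fun i => hS _).
have [z z_out] := (hS ord_max).2.
have [|l l_out] := line_avoids_subalgebras (a := p) (d := z - p) (fun i => (hS i).1).
  move=> i; case: (unliftP ord_max i) => [j ->|->].
    by exists 0; rewrite scale0r addr0.
  by exists 1; rewrite scale1r addrC subrK.
by have [t tl] := hF l; exists (p + t *: (z - p)); apply: l_out.
Qed.

End SubalgebraCover.

Theorem theorem1p1 (F : fieldType) (L : lmodType F) (br : L -> L -> L)
  (hF : infinite_field F) (hL : is_lie_bracket br) (hnil : nilpotent_lie br)
  (n : nat) (hdim : dim_derived_gt br ((n * (n - 1)) %/ 2)%N) :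
  ~ (exists (k : nat) (S : 'I_k -> L -> Prop),
       (forall i, lie_subalgebra br (S i) /\ proper_subset_pred (S i)) /\
       (forall x : L, breadth_ge br x n -> exists i, S i x)).
Proof.
move=> [k [S [hS cover]]].
have [x0 [y y_indep]] := exists_indep_brackets hL hF hdim.
have [p p_out] := exists_notin_subalgebras hF hS.
have [s s_indep] := lin_indep_pencil_cofinite (fun i => br (p - x0) (y i)) y_indep.
have [|l l_out] := line_avoids_subalgebras (a := x0) (d := p - x0) (fun i => (hS i).1).
  by move=> i; exists 1; rewrite scale1r addrC subrK.
have [t] := hF (l ++ s); rewrite mem_cat negb_or => /andP [tl ts].
have [i] : exists i, S i (x0 + t *: (p - x0)).
  apply/cover/(indep_brackets_breadth_ge hL); exists y.
  by apply: eq_lin_indep (s_indep t ts) => j; rewrite (lieDl hL x0) (lieZl hL t).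
exact: l_out.
Qed.
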